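(* Let $k\in\{1,\dots,n\}$ and let $R$ be a $k$-upper run of an $n$-DPDA. Then $R$ is $(k-1)$-upper if and only if $|\mathrm{top}^k(R(0))|\le|\mathrm{top}^k(R(i))|$ for every $i\in\{0,\dots,|R|\}$ such that $R[i,|R|]$ is $k$-upper.
   Context: Stacks: fix order $n\ge1$, finite stack alphabet $\Gamma$. A $0$-stack is $(\gamma,x)$ with $\gamma\in\Gamma$, $x=(x_n,\dots,x_1)$ a vector of $n$ positive integers (position). For $k\in\{1,\dots,n\}$ a $k$-stack is a finite list $[s_1,\dots,s_m]$ ($m\ge0$) of nonempty $(k-1)$-stacks such that for some $x_n,\dots,x_{k+1}$, every position in $s_i$ has the form $(x_n,\dots,x_{k+1},i,y_{k-1},\dots,y_1)$. The top is at the right; $|s^k|$ is the number of $(k-1)$-stacks in $s^k$; $s^k:s^{k-1}$ appends at the top (right-associative); for $s^r=t^r:t^{r-1}:\dots:t^k$, $\mathrm{top}^k(s^r)=t^k$. Equality of stacks includes positions. For $k<n$, $\mathsf p_{+1}(s^k)$ adds $1$ to the $(n-k)$-th coordinate of all positions. Operations of order $k\ge1$: $\mathsf{pop}^k(s^r:\dots:s^k:s^{k-1})=s^r:\dots:s^k$, defined only if the topmost $k$-stack has at least two $(k-1)$-stacks; $\mathsf{push}^k_\gamma(s^r:\dots:s^0)=s^r:\dots:s^{k+1}:(s^k:\dots:s^0):\mathsf p_{+1}(s^{k-1}:\dots:s^1:(\gamma,x))$ where $s^0=(\gamma',x)$. An $n$-DPDA has transitions determined by state and topmost stack symbol, each either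 $\mathrm{read}(\vec q)$ ($\vec q:A\to Q$ injective; leads to $(\vec q(a),s)$, reading $a$) or $(q,op)$ with $op$ a stack operation of order $\le n$ (leads to $(q,op(s))$ if defined). Configurations are (state, nonempty $n$-stack). A run is a finite sequence $R=c_0,\dots,c_m$ with each $c_i$ a successor of $c_{i-1}$; $R(i)=c_i$, $|R|=m$, $R[i,j]=c_i,\dots,c_j$. $\mathrm{top}^k(c)$ refers to the stack of $c$. History: for a run $R$ and a $0$-stack $s^0$ of $R(|R|)$, $\mathrm{hist}(R,s^0)$ is a $0$-stack of $R(0)$: if $|R|=0$ it is $s^0$; if $R=S\circ T$, $|T|=1$, and the last step is a read or a $\mathsf{pop}$, or a $\mathsf{push}^r_\gamma$ with $s^0$ not in the topmost $(r-1)$-stack of $R(|R|)$, it is $\mathrm{hist}(S,s^0)$; if the last step is $\mathsf{push}^r_\gamma$ and $s^0$ is in the topmost $(r-1)$-stack of $R(|R|)$, it is $\mathrm{hist}(S,t^0)$ with $t^0$ equal to $s^0$ with the $(n-r+1)$-th position coordinate decreased by $1$. For a $k$-stack $s^k$ of $R(|R|)$, $k\ge1$, $\mathrm{hist}(R,s^k)$ is the $k$-stack of $R(0)$ containing $\mathrm{hist}(R,s^0)$ for all $0$-stacks $s^0$ of $s^k$. For $k\in\{0,\dots,n\}$, $R$ is $k$-upper if $\mathrm{hist}(R,\mathrm{top}^k(R(|R|)))=\mathrm{top}^k(R(0))$. *)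

From mathcomp Require Import all_boot.
From Stdlib Require List.

Set Implicit Arguments.
Unset Strict Implicit.
Unset Printing Implicit Defensive.

(* Stacks.  A k-stack over alphabet G is a list (top at the RIGHT) of   *)
(* (k-1)-stacks; a 0-stack is a stack symbol.  Inside an n-stack the    *)
(* position (x_n,...,x_1) of every 0-stack is determined by the nesting *)
(* (x_j = 1-based index inside the enclosing j-stack), so positions are *)
(* represented as addresses [:: x_n; ...; x_1].          *)

Fixpoint stk (G : Type) (k : nat) : Type :=
  match k with 0 => G | k'.+1 => seq (stk G k') end.

Definition lastx (T : Type) (s : seq T) : option T :=
  match rev s with [::] => None | x :: _ => Some x end.

Definition droplast (T : Type) (s : seq T) : seq T := take (size s).-1 s.

Definition onthx (T : Type) (s : seq T) (i : nat) : option T :=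
  match drop i s with [::] => None | x :: _ => Some x end.

Fixpoint ne_stk (G : Type) (k : nat) : stk G k -> Prop :=
  match k return stk G k -> Prop with
  | 0 => fun _ => True
  | k'.+1 => fun s => s <> [::] /\ List.Forall (@ne_stk G k') s
  end.

Fixpoint topsym (G : Type) (k : nat) : stk G k -> option G :=
  match k return stk G k -> option G with
  | 0 => fun g => Some g
  | k'.+1 => fun s => match lastx s with Some t => @topsym G k' t | None => None end
  end.

Fixpoint settop (G : Type) (k : nat) (g : G) : stk G k -> stk G k :=
  match k return stk G k -> stk G k with
  | 0 => fun _ => g
  | k'.+1 => fun s => match lastx s with
                      | Some t => rcons (droplast s) (@settop G k' g t)
                      | None => s end
  end.

Fixpoint popk (G : Type) (k r : nat) : stk G k -> option (stk G k) :=
  match k return stk G k -> option (stk G k) with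
  | 0 => fun _ => None
  | k'.+1 => fun s =>
      if r == k'.+1 then (if 2 <= size s then Some (droplast s) else None)
      else match lastx s with
           | Some t => omap (fun t' => rcons (droplast s) t') (@popk G k' r t)
           | None => None end
  end.

Fixpoint pushk (G : Type) (k r : nat) (g : G) : stk G k -> option (stk G k) :=
  match k return stk G k -> option (stk G k) with
  | 0 => fun _ => None
  | k'.+1 => fun s =>
      match lastx s with
      | None => None
      | Some t =>
          if r == k'.+1 then Some (rcons s (@settop G k' g t))
          else omap (fun t' => rcons (droplast s) t') (@pushk G k' r g t)
      end
  end.

Fixpoint topsize (G : Type) (k j : nat) : stk G k -> nat :=
  match k return stk G k -> nat with
  | 0 => fun _ => 0
  | k'.+1 => fun s =>
      if j == k'.+1 then size s
      else match lastx s with Some t => @topsize G k' j t | None => 0 end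
  end.

Fixpoint toppos (G : Type) (k : nat) : stk G k -> seq nat :=
  match k return stk G k -> seq nat with
  | 0 => fun _ => [::]
  | k'.+1 => fun s => match lastx s with
                      | Some t => size s :: @toppos G k' t
                      | None => [::] end
  end.

Fixpoint is_pos (G : Type) (k : nat) : stk G k -> seq nat -> Prop :=
  match k return stk G k -> seq nat -> Prop with
  | 0 => fun _ x => x = [::]
  | k'.+1 => fun s x =>
      match x with
      | [::] => False
      | i :: x' => 0 < i /\ match onthx s i.-1 with
                            | Some t => @is_pos G k' t x'
                            | None => False end
      end
  end.

(* For an n-stack s: the 0-stack at position x lies in top^j(s) *)
Definition in_top (G : Type) (n j : nat) (s : stk G n) (x : seq nat) : Prop :=
  take (n - j) x = take (n - j) (toppos s).

Inductive stackop (G : Type) :=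
| Pop of nat
| Push of nat & G.

Inductive trans (Q A G : Type) :=
| TRead of (A -> Q)
| TOp of Q & stackop G.

Record dpda (Q A G : finType) := DPDA { delta : Q -> G -> trans Q A G }.

Definition wf_dpda (Q A G : finType) (n : nat) (D : dpda Q A G) : Prop :=
  forall q g, match delta D q g with
              | TRead f => injective f
              | TOp _ (Pop r) => 1 <= r <= n
              | TOp _ (Push r _) => 1 <= r <= n
              end.

Definition apply_op (G : Type) (n : nat) (op : stackop G) (s : stk G n)
  : option (stk G n) :=
  match op with Pop r => popk r s | Push r g => pushk r g s end.

Definition config (Q G : Type) (n : nat) : Type := (Q * stk G n)%type.

Definition succ (Q A G : finType) (n : nat) (D : dpda Q A G)
  (c c' : config Q G n) : Prop :=
  match topsym c.2 with
  | None => False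
  | Some g =>
      match delta D c.1 g with
      | TRead f => exists a, c' = (f a, c.2)
      | TOp q op => exists s', apply_op op c.2 = Some s' /\ c' = (q, s')
      end
  end.

Record run (Q G : Type) (n : nat) := Run { r0 : config Q G n; rs : seq (config Q G n) }.

Definition rlen (Q G : Type) (n : nat) (R : run Q G n) : nat := size (rs R).

Definition rat (Q G : Type) (n : nat) (R : run Q G n) (i : nat) : config Q G n :=
  nth (r0 R) (r0 R :: rs R) i.

Definition subrun_from (Q G : Type) (n : nat) (R : run Q G n) (i : nat) : run Q G n :=
  Run (rat R i) (drop i (rs R)).

Definition is_run (Q A G : finType) (n : nat) (D : dpda Q A G) (R : run Q G n) : Prop :=
  (forall i, i <= rlen R -> ne_stk (rat R i).2) /\
  (forall i, i < rlen R -> succ D (rat R i) (rat R i.+1)).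

(* history of one step c -> c' : position in c' |-> position in c *)
Definition hist_step (Q A G : finType) (n : nat) (D : dpda Q A G)
  (c c' : config Q G n) (x : seq nat) : seq nat :=
  match topsym c.2 with
  | None => x
  | Some g =>
      match delta D c.1 g with
      | TOp _ (Push r _) =>
          if take (n - r + 1) x == take (n - r + 1) (toppos c'.2)
          (* x lies in the topmost (r-1)-stack of c' : decrease the
             (n-r+1)-th coordinate (0-based index n-r) *)
          then set_nth 0 x (n - r) (nth 0 x (n - r)).-1
          else x
      | _ => x
      end
  end.

(* hist(R, x) : position in R(0) of the history of the 0-stack at x in R(|R|) *)
Definition hist (Q A G : finType) (n : nat) (D : dpda Q A G) (R : run Q G n)
  (x : seq nat) : seq nat :=
  foldr (fun st y => hist_step D st.1 st.2 y) x
        (zip (r0 R :: rs R) (rs R)).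

Definition upper (Q A G : finType) (n : nat) (D : dpda Q A G) (k : nat)
  (R : run Q G n) : Prop :=
  forall x, is_pos (rat R (rlen R)).2 x -> in_top k (rat R (rlen R)).2 x ->
            in_top k (r0 R).2 (hist D R x).

(* Positions are addresses [:: x_n; ...; x_1]; write K = n - k, so that
   |top^k(s)| is coordinate K of the topmost position of s, "j-upper" is a
   statement about the first n - j coordinates of the history of the topmost
   position, and (k-1)-upper adds coordinate K to the k-upper condition.
   Let trace i be the history, taken back to R(i), of the topmost position of
   the last configuration.  The proof rests on three facts about one history
   step: it maps positions to positions, it respects agreement of prefixes,
   and it either leaves coordinate K unchanged (never increasing it) or, for a
   push of order k, resets the first K+1 coordinates to those of the topmost
   position.  Hence coordinate K of the trace is nondecreasing along the run
   (giving "only if", together with the fact that a position agreeing with the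
   top on K coordinates is bounded by it at coordinate K), and a descending
   induction produces, for every i, a later index j where R[j,|R|] is k-upper
   and the top at R(j) is bounded by trace i at coordinate K (giving "if"). *)
From mathcomp Require Import all_boot zify.

Set Implicit Arguments.
Unset Strict Implicit.
Unset Printing Implicit Defensive.

Lemma lastx_rcons (T : Type) (p : seq T) x : lastx (rcons p x) = Some x.
Proof. by rewrite /lastx rev_rcons. Qed.

Lemma droplast_rcons (T : Type) (p : seq T) x : droplast (rcons p x) = p.
Proof. by rewrite /droplast size_rcons /= -cats1 take_size_cat. Qed.

Lemma onthx_rcons (T : Type) (p : seq T) x i :
  onthx (rcons p x) i =
  if i < size p then onthx p i else if i == size p then Some x else None.
Proof.
have onthxE (s : seq T) j : onthx s j = nth None (map Some s) j.
  by elim: s j => [|a s IH] [|j] //=; rewrite -IH.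
by rewrite !onthxE map_rcons nth_rcons size_map.
Qed.

Lemma onthx_lt (T : Type) (p : seq T) i t : onthx p i = Some t -> i < size p.
Proof. by rewrite /onthx; case: ltnP => // H; rewrite drop_oversize. Qed.

Lemma Forall_rcons (T : Type) (P : T -> Prop) p x : List.Forall P (rcons p x) -> P x.
Proof. by elim: p => [|a p IH] /= H; inversion H => //; apply: IH. Qed.

Lemma take_set_nth_small (T : Type) (x0 : T) (s : seq T) p v j :
  j <= p < size s -> take j (set_nth x0 s p v) = take j s.
Proof.
elim: j s p => [|j IH] [|a s] [|p] //= /andP[Hjp Hp]; rewrite ?take0 // IH //.
exact/andP.
Qed.

Lemma take_set_nth_large (T : Type) (x0 : T) (s : seq T) p v j :
  p < j -> take j (set_nth x0 s p v) = set_nth x0 (take j s) p v.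
Proof.
elim: j s p => [|j IH] [|a s] [|p] //= Hj; rewrite ?take0 //.
- by rewrite -set_nth_nil (IH [::]).
- by rewrite IH.
Qed.

Lemma take_succ_eq (s t : seq nat) K : K < size s -> K < size t ->
  take K.+1 s = take K.+1 t <-> take K s = take K t /\ nth 0 s K = nth 0 t K.
Proof.
move=> Ks Kt; rewrite !(take_nth 0) //; split; first by move/rcons_inj => [-> ->].
by case=> -> ->.
Qed.

Lemma down_ind (P : nat -> Prop) m :
  P m -> (forall i, i < m -> P i.+1 -> P i) -> forall i, i <= m -> P i.
Proof.
move=> Pm IH i Hi; have [d ->] : exists d, i = m - d by exists (m - i); lia.
elim: d => [|d IHd]; first by rewrite subn0.
case: (leqP m d) => Hmd; first by have -> : m - d.+1 = m - d by lia.
by apply: IH; [lia | have -> : (m - d.+1).+1 = m - d by lia].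
Qed.

Lemma toppos_is_pos (G : Type) k (s : stk G k) : ne_stk s -> is_pos s (toppos s).
Proof.
elim: k s => [|k IH] s //=.
case: (lastP s) => [|p t]; first by case.
move=> [_ HF]; rewrite lastx_rcons /= size_rcons; split => //.
by rewrite onthx_rcons ltnn eqxx; apply: IH; apply: Forall_rcons HF.
Qed.

Lemma pos_size (G : Type) k (s : stk G k) x : is_pos s x -> size x = k.
Proof.
elim: k s x => [|k IH] s x /=; first by move->.
by case: x => [|i x] //= [_]; case: onthx => [t|] // Ht; rewrite (IH _ _ Ht).
Qed.

Lemma toppos_size (G : Type) k (s : stk G k) : ne_stk s -> size (toppos s) = k.
Proof. by move/toppos_is_pos/pos_size. Qed.

Lemma pos_le_toppos (G : Type) k (s : stk G k) x j :
  is_pos s x -> take j x = take j (toppos s) -> j < k ->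
  nth 0 x j <= nth 0 (toppos s) j.
Proof.
elim: k s x j => [|k IH] s x j //=.
case: x => [|i x] // [Hi]; case E: onthx => [t|] // Ht.
case: (lastP s) E => [|p u]; first by move=> E; have := onthx_lt E.
rewrite lastx_rcons size_rcons onthx_rcons => E; case: j => [|j] /=.
  by move=> _ _; move: E; case: ltnP => H1; [lia | case: eqP => //; lia].
case=> Hieq Htk Hj; move: E; rewrite Hieq -pred_Sn ltnn eqxx => -[Eu]; subst.
exact: IH.
Qed.

Lemma topsize_toppos (G : Type) k j (s : stk G k) : ne_stk s -> 1 <= j <= k ->
  topsize j s = nth 0 (toppos s) (k - j).
Proof.
elim: k s => [|k IH] s Hne Hj; first by lia.
rewrite /=; case: (lastP s) Hne => [|p t]; first by case.
move=> [_ HF]; rewrite lastx_rcons; case: eqP => Hjk; first by rewrite Hjk subnn.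
have -> : k.+1 - j = (k - j).+1 by lia.
by rewrite /= IH //; [apply: Forall_rcons HF | lia].
Qed.

Lemma popk_pos (G : Type) k r (s s' : stk G k) x :
  popk r s = Some s' -> is_pos s' x -> is_pos s x.
Proof.
elim: k r s s' x => [|k IH] r s s' x //=.
case: x => [|i x] //; case: (lastP s) => [|p u]; first by case: (r == k.+1).
rewrite lastx_rcons droplast_rcons; case: (r == k.+1).
  case: ifP => // _ [<-] [Hi]; case E: onthx => [t|] // Ht; split => //.
  by rewrite onthx_rcons (onthx_lt E) E.
case E1: popk => [t'|] //= [<-] [Hi Hm]; split => //; move: Hm; rewrite !onthx_rcons.
by case: ifP => // _; case: (i.-1 == size p) => //; apply: IH E1.
Qed.

Lemma settop_pos (G : Type) k g (t : stk G k) x : is_pos (settop g t) x -> is_pos t x.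
Proof.
elim: k t x => [|k IH] t x //=.
case: (lastP t) => [|p u] //; rewrite lastx_rcons droplast_rcons.
case: x => [|i x] //= [Hi Hm]; split => //; move: Hm; rewrite !onthx_rcons.
by case: ifP => // _; case: (i.-1 == size p) => //; apply: IH.
Qed.

Lemma pushk_pos (G : Type) k r g (s s' : stk G k) x :
  1 <= r <= k -> pushk r g s = Some s' -> is_pos s' x ->
  is_pos s (if take (k - r + 1) x == take (k - r + 1) (toppos s')
            then set_nth 0 x (k - r) (nth 0 x (k - r)).-1 else x).
Proof.
elim: k r s s' x => [|k IH] r s s' x Hr; first by lia.
rewrite /=; case: (lastP s) => [|p t] //; rewrite lastx_rcons droplast_rcons.
case: x => [|i x] //; case: eqP => Hrk.
  move=> [<-]; rewrite lastx_rcons size_rcons /= Hrk subnn /= => -[Hi Hm].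
  case: eqP => Hie.
    case: Hie => Ei _; move: Hm; rewrite Ei !size_rcons /= !onthx_rcons ?size_rcons.
    by rewrite !ltnn !eqxx /= => H; split => //; apply: settop_pos H.
  split => //; move: Hm; rewrite !onthx_rcons size_rcons.
  case: ifP => // _; case: eqP => // H2; exfalso; apply: Hie.
  by rewrite size_rcons !take0; congr (_ :: _); lia.
case E: pushk => [t'|] //= [<-]; rewrite lastx_rcons size_rcons /= => -[Hi Hm].
have Hr' : 1 <= r <= k by lia.
have -> : k.+1 - r + 1 = (k - r + 1).+1 by lia.
have -> : k.+1 - r = (k - r).+1 by lia.
rewrite /= eqseq_cons; case: (i =P (size p).+1) => Hie /=.
  subst i; move: Hm; rewrite onthx_rcons ltnn eqxx => Hm.
  have := IH _ _ _ _ Hr' E Hm; case: ifP => _ H /=; split => //;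
    by rewrite onthx_rcons ltnn eqxx.
split => //; move: Hm; rewrite !onthx_rcons.
by case: ifP => // _; case: eqP => // H2; exfalso; apply: Hie; lia.
Qed.

Lemma pushk_toppos (G : Type) k r g (s s' : stk G k) :
  1 <= r <= k -> pushk r g s = Some s' ->
  take (k - r) (toppos s') = take (k - r) (toppos s) /\
  nth 0 (toppos s') (k - r) = (nth 0 (toppos s) (k - r)).+1.
Proof.
elim: k r s s' => [|k IH] r s s' Hr; first by lia.
rewrite /=; case: (lastP s) => [|p t] //; rewrite lastx_rcons droplast_rcons.
case: eqP => Hrk.
  by move=> [<-]; rewrite lastx_rcons !size_rcons /= Hrk subnn.
case E: pushk => [t'|] //= [<-]; rewrite lastx_rcons size_rcons /=.
have Hr' : 1 <= r <= k by lia.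
have -> : k.+1 - r = (k - r).+1 by lia.
by have [H1 H2] := IH _ _ _ Hr' E; rewrite /= H1 H2 size_rcons.
Qed.

Section HistoryStep.

Variables (Q A G : finType) (n : nat) (D : dpda Q A G).
Hypothesis wfD : wf_dpda n D.

Lemma hist_step_pos (c c' : config Q G n) x :
  succ D c c' -> is_pos c'.2 x -> is_pos c.2 (hist_step D c c' x).
Proof.
rewrite /succ /hist_step; case: (topsym c.2) => [g|] //; have := wfD c.1 g.
case: (delta D c.1 g) => [f|q [r|r g']] /=.
- by move=> _ [a ->].
- by move=> _ [s' [E ->]] /=; apply: popk_pos E.
- by move=> Hr [s' [E ->]] /=; apply: pushk_pos Hr E.
Qed.

Lemma hist_step_nth_le (c c' : config Q G n) x K :
  nth 0 (hist_step D c c' x) K <= nth 0 x K.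
Proof.
rewrite /hist_step; case: (topsym c.2) => [g|] //.
case: (delta D c.1 g) => [f|q [r|r g']] //.
by case: ifP => // _; rewrite nth_set_nth /=; case: eqP => // ->; apply: leq_pred.
Qed.

Lemma hist_step_take (c c' : config Q G n) x x' j :
  size x = n -> size x' = n -> take j x = take j x' ->
  take j (hist_step D c c' x) = take j (hist_step D c c' x').
Proof.
move=> Hx Hx' Ht; rewrite /hist_step; case: (topsym c.2) => [g|] //.
have := wfD c.1 g; case: (delta D c.1 g) => [f|q [r|r g']] // Hr.
have pn : n - r < n by lia.
case: (leqP j (n - r)) => [jp|pj].
  by do 2 (case: ifP => _); rewrite ?take_set_nth_small ?Hx ?Hx' ?jp.
have Hp : take (n - r + 1) x = take (n - r + 1) x'.
  by rewrite addn1 -(take_takel _ pj) Ht take_takel.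
have Hnth : nth 0 x (n - r) = nth 0 x' (n - r).
  by rewrite -(nth_take 0 pj) Ht nth_take.
by rewrite Hp; case: ifP => // _; rewrite !take_set_nth_large // Ht Hnth.
Qed.

(* Coordinate K either survives a history step, or the step undoes a push of
   order n - K and the first K+1 coordinates become those of the top of c. *)
Lemma hist_step_coord (c c' : config Q G n) x K :
  succ D c c' -> ne_stk c.2 -> size x = n -> K < n ->
  nth 0 (hist_step D c c' x) K = nth 0 x K \/
  take K.+1 (hist_step D c c' x) = take K.+1 (toppos c.2).
Proof.
move=> Hsucc Hne Hx HK; move: Hsucc; rewrite /succ /hist_step.
case: (topsym c.2) => [g|] //; have := wfD c.1 g.
case: (delta D c.1 g) => [f|q [r|r g']] Hr; try by left.
case=> s' [Hpush ->] /=; case: ifP => [/eqP Htk|]; last by left.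
case: (eqVneq (n - r) K) => [HrK|HrK]; last first.
  by left; rewrite nth_set_nth /= eq_sym (negbTE HrK).
right; subst K; rewrite addn1 in Htk.
have [Htop Hnth] := pushk_toppos Hr Hpush.
have Hsz := toppos_size Hne.
have Htk1 : take (n - r) x = take (n - r) (toppos s').
  by rewrite -(take_takel _ (leqnSn _)) Htk take_takel.
have Htk2 : nth 0 x (n - r) = nth 0 (toppos s') (n - r).
  by rewrite -(nth_take 0 (ltnSn _)) Htk nth_take.
rewrite !(take_nth 0) ?size_set_nth ?Hsz; try lia.
by rewrite take_set_nth_small ?Hx ?leqnn // nth_set_nth /= eqxx Htk1 Htop Htk2 Hnth.
Qed.

End HistoryStep.

Section RunHistory.

Variables (Q A G : finType) (n : nat) (D : dpda Q A G) (R : run Q G n).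
Hypotheses (wfD : wf_dpda n D) (runR : is_run D R).

Lemma subrun_from0 : subrun_from R 0 = R.
Proof. by case: R => c s; rewrite /subrun_from drop0. Qed.

Lemma rat_subrun_last i : i <= rlen R ->
  rat (subrun_from R i) (rlen (subrun_from R i)) = rat R (rlen R).
Proof.
rewrite /rat /rlen /subrun_from /= size_drop => Hi.
case E: (size (rs R) - i) => [|d] /=; first by have -> : i = size (rs R) by lia.
rewrite nth_drop; case E2: (size (rs R)) => [|m]; first by lia.
have -> : i + d = m by lia.
by apply: set_nth_default; lia.
Qed.

Lemma hist_subrun_last x : hist D (subrun_from R (rlen R)) x = x.
Proof. by rewrite /hist /subrun_from /= drop_size. Qed.

Lemma hist_subrun_step i x : i < rlen R ->
  hist D (subrun_from R i) x =
  hist_step D (rat R i) (rat R i.+1) (hist D (subrun_from R i.+1) x).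
Proof. by move=> Hi; rewrite /hist /subrun_from /= (drop_nth (r0 R) Hi). Qed.

Lemma hist_subrun_pos i x : i <= rlen R -> is_pos (rat R (rlen R)).2 x ->
  is_pos (rat R i).2 (hist D (subrun_from R i) x).
Proof.
move=> Hi Hx; move: i Hi; apply: down_ind; first by rewrite hist_subrun_last.
by move=> i Hi IH; rewrite hist_subrun_step //; apply: hist_step_pos (runR.2 i Hi) IH.
Qed.

Lemma hist_subrun_take i x x' j : i <= rlen R ->
  is_pos (rat R (rlen R)).2 x -> is_pos (rat R (rlen R)).2 x' ->
  take j x = take j x' ->
  take j (hist D (subrun_from R i) x) = take j (hist D (subrun_from R i) x').
Proof.
move=> Hi Hx Hx' Hxx'; move: i Hi; apply: down_ind; first by rewrite !hist_subrun_last.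
move=> i Hi IH; rewrite !(hist_subrun_step _ Hi).
by apply: hist_step_take IH => //; apply: pos_size (hist_subrun_pos Hi _).
Qed.

Definition top_at (i : nat) : seq nat := toppos (rat R i).2.

Definition trace (i : nat) : seq nat :=
  hist D (subrun_from R i) (top_at (rlen R)).

Lemma top_at_size i : i <= rlen R -> size (top_at i) = n.
Proof. by move=> Hi; apply: toppos_size (runR.1 i Hi). Qed.

Lemma trace_pos i : i <= rlen R -> is_pos (rat R i).2 (trace i).
Proof. by move=> Hi; apply: hist_subrun_pos => //; apply: toppos_is_pos (runR.1 _ _). Qed.

Lemma trace_size i : i <= rlen R -> size (trace i) = n.
Proof. by move/trace_pos/pos_size. Qed.

Lemma trace_step i : i < rlen R ->
  trace i = hist_step D (rat R i) (rat R i.+1) (trace i.+1).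
Proof. exact: hist_subrun_step. Qed.

(* R[i,|R|] is j-upper iff the trace at i agrees with the top of R(i) on the
   first n - j coordinates: it suffices to follow the topmost position. *)
Lemma upper_subrunE j i : i <= rlen R ->
  upper D j (subrun_from R i) <-> take (n - j) (trace i) = take (n - j) (top_at i).
Proof.
move=> Hi; have Hlast := toppos_is_pos (runR.1 _ (leqnn (rlen R))).
rewrite /upper rat_subrun_last //; split => [Hup | Htr x Hx Htop].
  by apply: Hup.
by rewrite /in_top -Htr; apply: hist_subrun_take.
Qed.

Lemma trace_nth_mono K i : i <= rlen R -> nth 0 (trace 0) K <= nth 0 (trace i) K.
Proof.
elim: i => [|i IH] Hi //; apply: leq_trans (IH (ltnW Hi)) _.
by rewrite (trace_step Hi) hist_step_nth_le.
Qed.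

Lemma trace_nth_le_top K i : K < n -> i <= rlen R ->
  take K (trace i) = take K (top_at i) -> nth 0 (trace i) K <= nth 0 (top_at i) K.
Proof. by move=> HK Hi Hpre; apply: pos_le_toppos (trace_pos Hi) Hpre HK. Qed.

Lemma upper_witness K : K < n -> forall i, i <= rlen R ->
  exists2 j, i <= j <= rlen R &
    take K (trace j) = take K (top_at j) /\ nth 0 (top_at j) K <= nth 0 (trace i) K.
Proof.
move=> HK; apply: down_ind.
  by exists (rlen R); rewrite ?leqnn // /trace hist_subrun_last.
move=> i Hi [j Hj [Hpre Hle]].
have [Hkeep | Hreset] := hist_step_coord wfD (runR.2 i Hi) (runR.1 i (ltnW Hi))
  (trace_size Hi) HK.
  by exists j; [lia | rewrite (trace_step Hi) Hkeep].
have Hsize : K < size (trace i) by rewrite trace_size //; apply: ltnW.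
have Htsize : K < size (top_at i) by rewrite top_at_size //; apply: ltnW.
rewrite -(trace_step Hi) in Hreset.
have [Hpre_i Hnth_i] := (take_succ_eq Hsize Htsize).1 Hreset.
by exists i; [lia | rewrite Hnth_i].
Qed.

End RunHistory.

Theorem mainTheorem5 (Q A G : finType) (n : nat) (D : dpda Q A G)
  (k : nat) (R : run Q G n) :
  wf_dpda n D -> 1 <= k <= n -> is_run D R -> upper D k R ->
  (upper D k.-1 R <->
   (forall i, i <= rlen R -> upper D k (subrun_from R i) ->
      topsize k (r0 R).2 <= topsize k (rat R i).2)).
Proof.
move=> wfD Hk runR HupR; set K := n - k.
have HK : K < n by rewrite /K; lia.
have H0 : 0 <= rlen R by [].
have Htopsize i : i <= rlen R -> topsize k (rat R i).2 = nth 0 (top_at R i) K.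
  by move=> Hi; apply: topsize_toppos (runR.1 i Hi) Hk.
have Hpre0 : take K (trace D R 0) = take K (top_at R 0).
  by apply/(upper_subrunE wfD runR k H0); rewrite subrun_from0.
have Hprev : upper D k.-1 R <-> nth 0 (trace D R 0) K = nth 0 (top_at R 0) K.
  rewrite -{1}(subrun_from0 R) (upper_subrunE wfD runR _ H0).
  have -> : n - k.-1 = K.+1 by rewrite /K; lia.
  rewrite take_succ_eq ?(trace_size wfD runR H0) ?(top_at_size runR H0) //.
  by split => [[] // | Hnth]; split.
rewrite Hprev (_ : r0 R = rat R 0) // Htopsize //; split.
  move=> Heq i Hi /(upper_subrunE wfD runR k Hi) Hpre; rewrite Htopsize // -Heq.
  exact: leq_trans (trace_nth_mono D K Hi) (trace_nth_le_top wfD runR HK Hi Hpre).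
move=> Hall; have [j /andP[_ Hj] [Hpre Hle]] := upper_witness wfD runR HK H0.
have := Hall j Hj ((upper_subrunE wfD runR k Hj).2 Hpre); rewrite Htopsize // => Hge.
by apply/eqP; rewrite eqn_leq trace_nth_le_top //; apply: leq_trans Hge Hle.
Qed.
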